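(* Let $(M,f,g)$ be an $(m,n)$-hypermodule over a commutative Krasner $(m,n)$-hyperring $(R,f',g')$ with scalar identity $1$, let $Q$ be a proper subhypermodule of $M$, and let $\phi:\mathcal{SH}(M)\to\mathcal{SH}(M)\cup\{\varnothing\}$ be a function such that $\phi(Q)$ is a subhypermodule of $M$ with $\phi(Q)\subseteq Q$. Then the following are equivalent: (1) $Q$ is an $n$-ary $\phi$-classical prime subhypermodule of $M$; (2) $Q/\phi(Q)$ is an $n$-ary weakly classical prime subhypermodule of $M/\phi(Q)$.
   Context: A commutative Krasner $(m,n)$-hyperring with scalar identity $1$ is a triple $(R,f',g')$ where $(R,f')$ is a canonical $m$-ary hypergroup with zero $0$, $(R,g')$ is a commutative $n$-ary semigroup, $g'$ is distributive over $f'$, $0$ is a zero element for $g'$, and $g'(x,1^{(n-1)})=x$. Notation: $x_i^j$ denotes $x_i,\dots,x_j$ and $x^{(k)}$ denotes $x$ repeated $k$ times. An $(m,n)$-hypermodule over $R$ is a triple $(M,f,g)$ with $(M,f)$ a canonical $m$-ary hypergroup with zero $0$ and $g:R^{n-1}\times M\to P^*(M)$ satisfying: $g(r_1^{n-1},f(x_1^m))=f(g(r_1^{n-1},x_1),\dots,g(r_1^{n-1},x_m))$; $g(r_1^{i-1},f'(s_1^m),r_{i+1}^{n-1},x)=f(g(r_1^{i-1},s_1,r_{i+1}^{n-1},x),\dots,g(r_1^{i-1},s_m,r_{i+1}^{n-1},x))$; $g(r_1^{i-1},g'(r_i^{i+n-1}),r_{i+n}^{2n-2},x)=g(r_1^{n-1},g(r_n^{2n-2},x))$;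 $g(r_1^{i-1},0,r_{i+1}^{n-1},x)=\{0\}$; moreover $g(1^{(n-1)},a)=\{a\}$. Operations on subsets are unions over elements. A subhypermodule is a nonempty $N\subseteq M$ with $(N,f)$ an $m$-ary subhypergroup and $g(R^{(n-1)},N)\subseteq N$; $\mathcal{SH}(M)$ is the set of subhypermodules of $M$. A proper subhypermodule $Q$ of $M$ is $n$-ary $\phi$-classical prime if $g(r_1^{n-1},a)\subseteq Q\setminus\phi(Q)$ ($r_i\in R$, $a\in M$) implies $g(r_i,1^{(n-2)},a)\subseteq Q$ for some $1\le i\le n-1$. A proper subhypermodule $Q$ of an $(m,n)$-hypermodule is $n$-ary weakly classical prime if $0\notin G(r_1^{n-1},x)\subseteq Q$ implies $G(r_i,1^{(n-2)},x)\subseteq Q$ for some $i$, where $G$ is the external operation and $0$ the zero. For a subhypermodule $N$, $M/N=\{f(a,N,0^{(m-2)}):a\in M\}$ is an $(m,n)$-hypermodule with $F(f(a_1,N,0^{(m-2)}),\dots,f(a_m,N,0^{(m-2)}))=\{f(t,N,0^{(m-2)}):t\in f(a_1^m)\}$ and $G(r_1^{n-1},f(a,N,0^{(m-2)}))=\{f(z,N,0^{(m-2)}):z\in g(r_1^{n-1},a)\}$, with zero $N$; for a subhypermodule $K\supseteq N$, $K/N=\{f(a,N,0^{(m-2)}):a\in K\}$. *)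

(* Sets are Prop-valued predicates; n-ary (hyper)operations act on
   sequences, and all axioms are imposed only on sequences of the right
   length (values on other lengths are irrelevant junk). Indices are 0-based. *)
From Stdlib Require Permutation.
From mathcomp Require Import all_boot.

Set Implicit Arguments.
Unset Strict Implicit.
Unset Printing Implicit Defensive.

Definition pset (T : Type) := T -> Prop.
Definition psub {T} (A B : pset T) := forall x, A x -> B x.
Definition pseteq {T} (A B : pset T) := forall x, A x <-> B x.
Definition psing {T} (x : T) : pset T := fun y => y = x.

Definition liftS {T U} (f : seq T -> pset U) (As : seq (pset T)) : pset U :=
  fun z => exists xs, List.Forall2 (fun x (A : pset T) => A x) xs As /\ f xs z.

Section Hyper.
Variable T : Type.
Variable m : nat.
Variable f : seq T -> pset T.

(* f(x_1^{i-1}, f(x_i^{i+m-1}), x_{i+m}^{2m-1}) for xs of length 2m-1, i 0-based *)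
Definition assocS (xs : seq T) (i : nat) : pset T :=
  liftS f (map psing (take i xs) ++ f (take m (drop i xs)) :: map psing (drop (i + m) xs)).

Definition hyp_assoc := forall xs i, size xs = (2 * m - 1)%N -> i < m ->
  pseteq (assocS xs i) (assocS xs 0).

Definition hyp_nonempty := forall xs, size xs = m -> exists z, f xs z.

Definition hyp_reproduction := forall xs i a, size xs = m -> i < m ->
  exists y, f (set_nth a xs i y) a.

Definition hyp_comm := forall xs ys, size xs = m -> Permutation.Permutation xs ys ->
  pseteq (f xs) (f ys).

Definition mary_hypergroup := [/\ hyp_nonempty, hyp_assoc & hyp_reproduction].

Definition is_identity (e : T) := forall x, pseteq (f (x :: nseq m.-1 e)) (psing x).

Definition is_inv (e a b : T) := f (a :: b :: nseq (m - 2) e) e.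

Definition canonical_hypergroup (e : T) :=
  [/\ mary_hypergroup, hyp_comm,
      is_identity e /\ (forall e', is_identity e' -> e' = e),
      (forall x, exists y, is_inv e x y /\ forall y', is_inv e x y' -> y' = y) &
      (* reversibility: if x in f(x_1^m) then
         x_i in f(x, x_1^{-1},..,x_{i-1}^{-1},x_{i+1}^{-1},..,x_m^{-1}) *)
      (forall x xs ys i, size xs = m -> size ys = m -> i < m -> f xs x ->
         (forall j, j < m -> j <> i -> is_inv e (nth x xs j) (nth x ys j)) ->
         f (x :: (take i ys ++ drop i.+1 ys)) (nth x xs i))].
End Hyper.

Definition krasner_hyperring (m n : nat) (R : Type) (f' : seq R -> pset R)
  (g' : seq R -> R) (zero one : R) :=
  [/\ canonical_hypergroup m f' zero,
      (forall xs i, size xs = (2 * n - 1)%N -> i < n ->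
         g' (take i xs ++ g' (take n (drop i xs)) :: drop (i + n) xs)
         = g' (take n.-1 xs ++ [:: g' (drop n.-1 xs)])),
      (forall xs ys, size xs = n -> Permutation.Permutation xs ys -> g' xs = g' ys),
      (forall rs xs i, size rs = n -> size xs = m -> i < n ->
         pseteq (fun z => exists y, f' xs y /\ z = g' (set_nth zero rs i y))
                (f' (map (fun x => g' (set_nth zero rs i x)) xs))) &
      (forall rs i, size rs = n -> i < n -> g' (set_nth zero rs i zero) = zero) /\
      (forall x, g' (x :: nseq n.-1 one) = x)].

Definition hypermodule (m n : nat) (R : Type) (f' : seq R -> pset R)
  (g' : seq R -> R) (zero one : R) (M : Type) (f : seq M -> pset M)
  (g : seq R -> M -> pset M) (zeroM : M) :=
  [/\ canonical_hypergroup m f zeroM,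
      (forall rs x, size rs = n.-1 -> exists z, g rs x z) /\
      (forall rs xs, size rs = n.-1 -> size xs = m ->
         pseteq (fun z => exists y, f xs y /\ g rs y z) (liftS f (map (g rs) xs))),
      (forall rs ss i x, size rs = n.-1 -> size ss = m -> i < n.-1 ->
         pseteq (fun z => exists s, f' ss s /\ g (set_nth zero rs i s) x z)
                (liftS f (map (fun s => g (set_nth zero rs i s) x) ss))),
      (forall rs i x, size rs = (2 * n - 2)%N -> i < n.-1 ->
         pseteq (g (take i rs ++ g' (take n (drop i rs)) :: drop (i + n) rs) x)
                (fun z => exists y, g (drop n.-1 rs) x y /\ g (take n.-1 rs) y z)) &
      (forall rs i x, size rs = n.-1 -> i < n.-1 ->
         pseteq (g (set_nth zero rs i zero) x) (psing zeroM)) /\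
      (forall a, pseteq (g (nseq n.-1 one) a) (psing a))].

Section Sub.
Variables (m n : nat) (R T : Type) (f : seq T -> pset T) (g : seq R -> T -> pset T).

Definition is_subhmod (N : pset T) :=
  [/\ exists x, N x,
      (forall xs, size xs = m -> List.Forall N xs -> psub (f xs) N),
      (* reproduction inside N: (N,f) is itself an m-ary hypergroup *)
      (forall xs i a, size xs = m -> i < m -> List.Forall N xs -> N a ->
         exists y, N y /\ f (set_nth a xs i y) a) &
      (forall rs x, size rs = n.-1 -> N x -> psub (g rs x) N)].

Definition hproper (N : pset T) := exists x, ~ N x.

Definition weakly_classical_prime (one : R) (z : T) (Q : pset T) :=
  [/\ is_subhmod Q, hproper Q &
      forall rs x, size rs = n.-1 -> ~ g rs x z -> psub (g rs x) Q ->
        exists2 i, i < n.-1 & psub (g (nth one rs i :: nseq (n - 2) one) x) Q].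

Definition phi_classical_prime (one : R) (phi : pset T -> pset T) (Q : pset T) :=
  [/\ is_subhmod Q, hproper Q &
      forall rs x, size rs = n.-1 ->
        psub (g rs x) (fun y => Q y /\ ~ phi Q y) ->
        exists2 i, i < n.-1 & psub (g (nth one rs i :: nseq (n - 2) one) x) Q].
End Sub.

Section Quot.
Variables (m : nat) (R M : Type) (f : seq M -> pset M) (g : seq R -> M -> pset M)
  (zeroM : M) (N : pset M).

Definition coset (a : M) : pset M :=
  fun z => exists y, N y /\ f (a :: y :: nseq (m - 2) zeroM) z.

Record qelt := QElt { qval : pset M; qvalP : exists a, qval = coset a }.

Definition qF (Cs : seq qelt) : pset qelt :=
  fun D => exists as_ t, map qval Cs = map coset as_ /\ f as_ t /\ qval D = coset t.

Definition qG (rs : seq R) (C : qelt) : pset qelt :=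
  fun D => exists a z, qval C = coset a /\ g rs a z /\ qval D = coset z.

(* zero of M/N: f(0, N, 0^{(m-2)}) (which equals N) *)
Definition qzero : qelt := @QElt (coset zeroM) (ex_intro _ zeroM erefl).

Definition qsub (K : pset M) : pset qelt :=
  fun C => exists a, K a /\ qval C = coset a.
End Quot.

From mathcomp Require Import all_boot.
From Stdlib Require Import FunctionalExtensionality PropExtensionality ProofIrrelevance.

Set Implicit Arguments.
Unset Strict Implicit.
Unset Printing Implicit Defensive.

(* Write [a'] for the coset f(a, N, 0^(m-2)) of N := phi(Q) in M.  Since N is
   a subhypermodule contained in Q, three facts transfer everything between M
   and M/N: [a'] lies in Q/N iff a lies in Q; G(r, a') is contained in Q/N iff
   g(r, a) is contained in Q (distributivity of g over f); and G(r, a')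
   contains the zero N of M/N iff g(r, a) meets N.  The last one rests on
   reversibility in the canonical hypergroup (M, f): if z lies in
   f(u, v_2, ..., v_m) with z and all v_i in N, then u lies in N.  With these,
   "g(r, a) lies in Q but not in N" is literally "0 is not in G(r, a') and
   G(r, a') lies in Q/N", so the two primeness conditions coincide. *)

Lemma subn2S k : 1 < k -> (k - 2).+1 = k.-1.
Proof. by move=> k_gt1; rewrite subn2 prednK // -subn1 subn_gt0. Qed.

Lemma Forall_nseq (T : Type) (P : pset T) k x : P x -> List.Forall P (nseq k x).
Proof. by move=> Px; elim: k => [|k IH] //=; constructor. Qed.

Lemma Forall_liftS (T U : Type) (P : pset U) (F : T -> pset U) xs ys :
  List.Forall2 (fun y (A : pset U) => A y) ys (map F xs) ->
  List.Forall (fun x => psub (F x) P) xs -> List.Forall P ys /\ size ys = size xs.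
Proof.
elim: xs ys => [|x xs IH] [|y ys] //= H; try by inversion H.
move: H => /List.Forall2_cons_iff [Fy Hys] /List.Forall_cons_iff [FxP HxsP].
by have [Pys ->] := IH ys Hys HxsP; split => //; constructor; first exact: FxP.
Qed.

Lemma map_set_nth (A B : Type) (F : A -> B) x0 (s : seq A) i y : i < size s ->
  map F (set_nth x0 s i y) = set_nth (F x0) (map F s) i (F y).
Proof. by elim: s i => [|a s IH] [|i] //= Hi; rewrite IH. Qed.

Lemma subhmod_zero (m n : nat) (R : Type) (f' : seq R -> pset R) (g' : seq R -> R)
    (zero one : R) (M : Type) (f : seq M -> pset M) (g : seq R -> M -> pset M)
    (zeroM : M) (N : pset M) :
  1 < n -> hypermodule m n f' g' zero one f g zeroM -> is_subhmod m n f g N -> N zeroM.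
Proof.
case: n => [|[|k]] // _ [_ _ _ _ [g_zero _]] [[x Nx] _ _ N_g_closed].
have size_zeros : size (nseq k.+1 zero) = k.+1 by rewrite size_nseq.
apply: (N_g_closed _ x size_zeros Nx).
exact: ((g_zero _ 0 x size_zeros erefl zeroM).2 erefl).
Qed.

Section Quotient.
Variables (m n : nat) (R : Type) (f' : seq R -> pset R) (g' : seq R -> R) (zero one : R).
Variables (M : Type) (f : seq M -> pset M) (g : seq R -> M -> pset M) (zeroM : M).
Variables (N Q : pset M).
Hypotheses (m_gt1 : 1 < m) (n_gt1 : 1 < n).
Hypothesis M_hmod : hypermodule m n f' g' zero one f g zeroM.
Hypotheses (N_sub : is_subhmod m n f g N) (Q_sub : is_subhmod m n f g Q).
Hypothesis N_le_Q : psub N Q.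

Local Notation coset := (coset m f zeroM N).
Local Notation qelt := (qelt m f zeroM N).
Local Notation qval := (@qval m M f zeroM N).
Local Notation qF := (@qF m M f zeroM N).
Local Notation qG := (@qG m R M f g zeroM N).
Local Notation qzero := (qzero m f zeroM N).

Let f_canonical : canonical_hypergroup m f zeroM.
Proof. by case: M_hmod. Qed.

Let g_distr : forall rs xs, size rs = n.-1 -> size xs = m ->
  pseteq (fun z => exists y, f xs y /\ g rs y z) (liftS f (map (g rs) xs)).
Proof. by case: M_hmod => _ []. Qed.

Let N_zero : N zeroM.
Proof. exact: subhmod_zero n_gt1 M_hmod N_sub. Qed.

Let N_f_closed := let: And4 _ closed _ _ := N_sub in closed.
Let N_reproduction := let: And4 _ _ rep _ := N_sub in rep.
Let N_g_closed := let: And4 _ _ _ closed := N_sub in closed.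
Let Q_f_closed := let: And4 _ closed _ _ := Q_sub in closed.
Let Q_reproduction := let: And4 _ _ rep _ := Q_sub in rep.
Let Q_g_closed := let: And4 _ _ _ closed := Q_sub in closed.

Lemma size_pad a y : size (a :: y :: nseq (m - 2) zeroM) = m.
Proof. by rewrite /= size_nseq subn2S // prednK // ltnW. Qed.

Lemma N_pad a : N a -> List.Forall N (a :: zeroM :: nseq (m - 2) zeroM).
Proof. by move=> Na; do 2!constructor => //; exact: Forall_nseq. Qed.

Lemma pad_zero x : f (x :: zeroM :: nseq (m - 2) zeroM) x.
Proof.
case: f_canonical => _ _ [f_id _] _ _.
rewrite /is_identity -(subn2S m_gt1) in f_id.
exact: (f_id x x).2.
Qed.

Lemma coset_sub (P : pset M) a :
  (forall xs, size xs = m -> List.Forall P xs -> psub (f xs) P) ->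
  psub N P -> P zeroM -> P a -> psub (coset a) P.
Proof.
move=> P_f_closed N_le_P P0 Pa z [y [Ny fz]].
apply: (P_f_closed _ (size_pad a y)) fz.
by do 2!constructor => //; [exact: N_le_P | exact: Forall_nseq].
Qed.

Lemma coset_refl a : coset a a.
Proof. by exists zeroM; split; [exact: N_zero | exact: pad_zero]. Qed.

Lemma N_sub_coset0 : psub N (coset zeroM).
Proof.
move=> x Nx; case: f_canonical => _ f_comm _ _ _; exists x; split => //.
apply: (f_comm _ _ (size_pad x zeroM) (Permutation.perm_swap _ _ _) x).1.
exact: pad_zero.
Qed.

Lemma coset_subN a : N a -> psub (coset a) N.
Proof. exact: coset_sub. Qed.

Lemma N_of_coset_eq0 z : coset z = coset zeroM -> N z.
Proof. by move=> Ez; apply: (coset_subN N_zero); rewrite -Ez; apply: coset_refl. Qed.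

Lemma coset_eq0 w : N w -> coset w = coset zeroM.
Proof.
move=> Nw; apply: functional_extensionality => x; apply: propositional_extensionality.
split=> [/(coset_subN Nw) | /(coset_subN N_zero) Nx]; first exact: N_sub_coset0.
have [y [Ny fx]] := N_reproduction (size_pad w zeroM) m_gt1 (N_pad Nw) Nx.
by exists y.
Qed.

Lemma inverse_in_N v : N v -> exists2 v', N v' & is_inv m f zeroM v v'.
Proof.
move=> /N_pad Nv_pad.
by have [v' [Nv' inv_v']] := N_reproduction (size_pad v zeroM) m_gt1 Nv_pad N_zero; exists v'.
Qed.

Lemma inverses_in_N vs : List.Forall N vs -> exists vs',
  [/\ size vs' = size vs, List.Forall N vs' &
      forall j d, j < size vs -> is_inv m f zeroM (nth d vs j) (nth d vs' j)].
Proof.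
elim: vs => [|v vs IH] /=; first by exists [::].
move=> /List.Forall_cons_iff [/inverse_in_N [v' Nv' inv_v'] /IH [vs' [<- Nvs' inv_vs]]].
by exists (v' :: vs'); split => //; [constructor | case].
Qed.

(* Reversibility gives u in f(z, v_2^-1, ..., v_m^-1), and N contains these inverses. *)
Lemma N_of_f_cons u vs z :
  size vs = m.-1 -> List.Forall N vs -> N z -> f (u :: vs) z -> N u.
Proof.
case: f_canonical => _ _ _ _ f_rev size_vs Nvs Nz fz.
have [vs' [size_vs' Nvs' inv_vs]] := inverses_in_N Nvs.
have size_cons (w : M) ws : size ws = m.-1 -> size (w :: ws) = m.
  by move=> /= ->; rewrite prednK // ltnW.
have size_vs'_m : size vs' = m.-1 by rewrite size_vs' size_vs.
have f_u : f (z :: vs') u.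
  have := f_rev z (u :: vs) (u :: vs') 0 (size_cons _ _ size_vs) (size_cons _ _ size_vs'_m).
  rewrite /= drop0; apply=> // [|[|j]] //; first exact: ltnW.
  by move=> j_lt _; apply: inv_vs; rewrite size_vs -ltnS prednK // ltnW.
by apply: (N_f_closed (size_cons z _ size_vs'_m)) f_u; constructor.
Qed.

Lemma g_coset_decomp s a b z : size s = n.-1 -> coset a b -> g s b z ->
  exists u vs, [/\ g s a u, size vs = m.-1, List.Forall N vs & f (u :: vs) z].
Proof.
move=> size_s [y [Ny fb]] gz.
have [[|u vs] [g_ys fz]] := (g_distr size_s (size_pad a y) z).1 (ex_intro _ b (conj fb gz)).
  by inversion g_ys.
move: g_ys => /= /List.Forall2_cons_iff [gu g_vs].
have N_g_pad : List.Forall (fun x => psub (g s x) N) (y :: nseq (m - 2) zeroM).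
  by constructor; [exact: N_g_closed | apply: Forall_nseq; exact: N_g_closed].
have [Nvs size_vs] := Forall_liftS (xs := y :: _) g_vs N_g_pad.
exists u, vs; split => //.
by rewrite size_vs /= size_nseq subn2S.
Qed.

Lemma g_coset_subQ s a b : size s = n.-1 -> coset a b -> psub (g s a) Q -> psub (g s b) Q.
Proof.
move=> size_s ab gaQ z /(g_coset_decomp size_s ab) [u [vs [gu size_vs Nvs fz]]].
apply: (Q_f_closed _ _ fz); first by rewrite /= size_vs prednK // ltnW.
by constructor; [exact: gaQ | exact: (List.Forall_impl _ N_le_Q Nvs)].
Qed.

Lemma g_coset_meetN s a b z : size s = n.-1 -> coset a b -> g s b z -> N z ->
  exists2 u, g s a u & N u.
Proof.
move=> size_s ab /(g_coset_decomp size_s ab) [u [vs [gu size_vs Nvs fz]]] Nz.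
by exists u => //; exact: N_of_f_cons fz.
Qed.

Lemma Q_of_coset_eq a b : coset a = coset b -> Q b -> Q a.
Proof.
move=> Eab Qb; apply: (coset_sub Q_f_closed N_le_Q (N_le_Q N_zero) Qb).
by rewrite -Eab; exact: coset_refl.
Qed.

Definition qcoset a : qelt := @QElt m M f zeroM N (coset a) (ex_intro _ a erefl).

Lemma qcoset_surj C : exists a, C = qcoset a.
Proof.
case: C => C [a Ca]; exists a; subst C.
by rewrite /qcoset; f_equal; exact: proof_irrelevance.
Qed.

Lemma qcoset_seq_surj Cs : exists cs, Cs = map qcoset cs.
Proof.
elim: Cs => [|C Cs [cs ->]]; first by exists [::].
by have [c ->] := qcoset_surj C; exists (c :: cs).
Qed.

Lemma qsub_qcoset a : qsub Q (qcoset a) <-> Q a.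
Proof. by split=> [[b [Qb Eab]] | Qa]; [exact: Q_of_coset_eq Eab Qb | exists a]. Qed.

Lemma qsub_reps Cs as_ :
  map qval Cs = map coset as_ -> List.Forall (qsub Q) Cs -> List.Forall Q as_.
Proof.
elim: Cs as_ => [|C Cs IH] [|a as_] //= [ECa Emap].
move=> /List.Forall_cons_iff [[c [Qc ECc]] QCs]; constructor; last exact: IH.
by apply: Q_of_coset_eq Qc; rewrite -ECa.
Qed.

Lemma qG_qcoset_subQ s x : size s = n.-1 ->
  psub (qG s (qcoset x)) (qsub Q) <-> psub (g s x) Q.
Proof.
move=> size_s; split=> [qgxQ z gz | gxQ D [a [z [Exa [gz ED]]]]].
  by apply/qsub_qcoset; apply: qgxQ; exists x, z.
exists z; split => //; apply: (g_coset_subQ size_s _ gxQ gz).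
by rewrite -[coset x]/(qval (qcoset x)) Exa; exact: coset_refl.
Qed.

Lemma qG_qcoset_zero s x : size s = n.-1 ->
  qG s (qcoset x) qzero <-> exists2 u, g s x u & N u.
Proof.
move=> size_s; split=> [[a [z [Exa [gz Ez]]]] | [u gu Nu]].
  apply: (g_coset_meetN size_s _ gz (N_of_coset_eq0 (esym Ez))).
  by rewrite -[coset x]/(qval (qcoset x)) Exa; exact: coset_refl.
by exists x, u; split => //; split => //=; rewrite coset_eq0.
Qed.

Lemma qsub_subhmod : is_subhmod m n qF qG (qsub Q).
Proof.
split.
- by exists qzero; exists zeroM; split => //; exact: N_le_Q.
- move=> Cs size_Cs QCs D [as_ [t [Emap [ft ED]]]]; exists t; split => //.
  apply: (Q_f_closed _ (qsub_reps Emap QCs) ft).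
  by rewrite -(size_map coset) -Emap size_map.
- move=> Cs i A; have [cs ->] := qcoset_seq_surj Cs; have [a ->] := qcoset_surj A.
  move=> size_Cs i_lt QCs /qsub_qcoset Qa.
  have Qcs : List.Forall Q cs by apply: qsub_reps QCs; rewrite -map_comp.
  have size_cs : size cs = m by rewrite -(size_map qcoset).
  have [y [Qy fa]] := Q_reproduction size_cs i_lt Qcs Qa.
  exists (qcoset y); split; first exact/qsub_qcoset.
  rewrite -map_set_nth ?size_cs //.
  by exists (set_nth a cs i y), a; rewrite -map_comp.
- move=> s C size_s [b [Qb ECb]] D [a [z [ECa [gz ED]]]]; exists z; split => //.
  by apply: (Q_g_closed size_s _ gz); apply: Q_of_coset_eq Qb; rewrite -ECa.
Qed.

Lemma qsub_proper : hproper Q -> hproper (qsub Q : pset qelt).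
Proof. by move=> [x nQx]; exists (qcoset x) => /qsub_qcoset. Qed.

Lemma classical_prime_quotient : hproper Q ->
  (forall rs x, size rs = n.-1 -> psub (g rs x) (fun y => Q y /\ ~ N y) ->
     exists2 i, i < n.-1 & psub (g (nth one rs i :: nseq (n - 2) one) x) Q) <->
  weakly_classical_prime m n qF qG one qzero (qsub Q).
Proof.
move=> Q_proper.
have size_ri rs i : size (nth one rs i :: nseq (n - 2) one) = n.-1.
  by rewrite /= size_nseq subn2S.
split=> [prime_Q | [_ _ prime_qQ] rs x size_rs gx_QN].
- split=> [||rs C size_rs]; [exact: qsub_subhmod | exact: qsub_proper |].
  have [x ->] := qcoset_surj C.
  move=> qgx_nz /(qG_qcoset_subQ _ size_rs) gxQ.
  have [|i i_lt gixQ] := prime_Q rs x size_rs.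
    by move=> y gy; split=> [|Ny]; [exact: gxQ | apply/qgx_nz/qG_qcoset_zero => //; exists y].
  by exists i => //; apply/qG_qcoset_subQ.
- have [||i i_lt /qG_qcoset_subQ gixQ] := prime_qQ rs (qcoset x) size_rs.
  + by move/qG_qcoset_zero => /(_ size_rs) [y /gx_QN []].
  + by apply/qG_qcoset_subQ => // y /gx_QN [].
  by exists i => //; apply: gixQ.
Qed.

End Quotient.

Theorem mainTheorem12 (m n : nat) (R : Type) (f' : seq R -> pset R)
  (g' : seq R -> R) (zero one : R) (M : Type) (f : seq M -> pset M)
  (g : seq R -> M -> pset M) (zeroM : M) (Q : pset M)
  (phi : pset M -> pset M) :
  2 <= m -> 2 <= n ->
  krasner_hyperring m n f' g' zero one ->
  hypermodule m n f' g' zero one f g zeroM ->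
  is_subhmod m n f g Q -> hproper Q ->
  (forall N, is_subhmod m n f g N ->
     is_subhmod m n f g (phi N) \/ (forall x, ~ phi N x)) ->
  is_subhmod m n f g (phi Q) -> psub (phi Q) Q ->
  (phi_classical_prime m n f g one phi Q <->
   weakly_classical_prime m n (@qF m M f zeroM (phi Q))
     (@qG m R M f g zeroM (phi Q)) one
     (qzero m f zeroM (phi Q)) (@qsub m M f zeroM (phi Q) Q)).
Proof.
(* Neither the hyperring axioms nor the values of phi away from Q are needed. *)
move=> m_gt1 n_gt1 _ M_hmod Q_sub Q_proper _ phiQ_sub phiQ_le_Q.
have prime_iff :=
  classical_prime_quotient m_gt1 n_gt1 M_hmod phiQ_sub Q_sub phiQ_le_Q Q_proper.
by split=> [[_ _ /prime_iff] | /prime_iff].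
Qed.
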